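(* Let $(X,\delta,c)$ be an accepting automaton over $\Sigma$ and let $\mu\mathrm{PL}(\delta,c)$ be as in the context. For every $x\in X$, the language $L(x,c)=\{u\in\Sigma^\ast\mid\delta(x)(u)\in c\}$ belongs to $\mu\mathrm{PL}(\delta,c)$, i.e. there is a state $\mathcal{U}$ of $\mu\mathrm{PL}(\delta,c)$ with $L(\mathcal{U})=L(x,c)$.
   Context: $\Sigma$ is a finite alphabet, $\Sigma^\ast$ the free monoid with empty word $\epsilon$, $u^r$ the reversal of $u$. An accepting automaton is $(X,\delta,c)$ with $\delta:X\to X^\Sigma$ (extended to words by $\delta(x)(\epsilon)=x$, $\delta(x)(wa)=\delta(\delta(x)(w))(a)$) and $c\subseteq X$. Define $\widehat{\delta}(U)(a)=\{x\mid\delta(x)(a)\in U\}$ for $U\subseteq X$, extended to words, so $\widehat{\delta}(U)(w)=\{x\mid\delta(x)(w^r)\in U\}$. Let $\langle c\rangle=\{\widehat{\delta}(c)(w)\mid w\in\Sigma^\ast\}$ and $u\approx v$ iff $\widehat{\delta}(U)(u)=\widehat{\delta}(U)(v)$ for all $U\in\langle c\rangle$. $\mu\mathrm{PL}(\delta,c)$ has state space $P(\Sigma^\ast/{\approx})$, transition $\widehat{\sigma}(\mathcal{U})(u)=\{[w]\mid[wu^r]\in\mathcal{U}\}$ and final states $\{\mathcal{U}\mid[\epsilon]\in\mathcal{U}\}$; $L(\mathcal{U})=\{u\mid[\epsilon]\in\widehat{\sigma}(\mathcal{U})(u)\}$. *)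

From mathcomp Require Import all_boot.
Set Implicit Arguments. Unset Strict Implicit. Unset Printing Implicit Defensive.

Section Auto.
Variables (Sigma : finType) (X : Type).
Variable delta : X -> Sigma -> X.

Definition deltaw (x : X) (w : seq Sigma) : X := foldl delta x w.

Definition hdelta1 (U : X -> Prop) (a : Sigma) : X -> Prop :=
  fun x => U (delta x a).

Definition hdelta (U : X -> Prop) (w : seq Sigma) : X -> Prop :=
  foldl hdelta1 U w.

Definition genc (c : X -> Prop) (U : X -> Prop) : Prop :=
  exists w, U = hdelta c w.

Definition approx (c : X -> Prop) (u v : seq Sigma) : Prop :=
  forall U, genc c U -> hdelta U u = hdelta U v.

Definition cls (c : X -> Prop) (w : seq Sigma) : seq Sigma -> Prop :=
  fun v => approx c v w.

(* states of muPL(delta,c): subsets of Sigma^*/~, i.e. sets of classes *)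
Definition muPL_state (c : X -> Prop) (UU : (seq Sigma -> Prop) -> Prop) : Prop :=
  forall C, UU C -> exists w, C = cls c w.

Definition hsigma (c : X -> Prop) (UU : (seq Sigma -> Prop) -> Prop) (u : seq Sigma)
  : (seq Sigma -> Prop) -> Prop :=
  fun C => exists w, C = cls c w /\ UU (cls c (w ++ rev u)).

Definition Lmu (c : X -> Prop) (UU : (seq Sigma -> Prop) -> Prop) : seq Sigma -> Prop :=
  fun u => hsigma c UU u (cls c [::]).

Definition Lxc (c : X -> Prop) (x : X) : seq Sigma -> Prop :=
  fun u => c (deltaw x u).

End Auto.

(* The state witnessing L(x,c) is the set of classes [v] with x in hd(c)(v).
   It is well defined because ~ refines equality of the sets hd(c)(v), and
   [eps] lies in hsigma of it at u exactly when x lies in hd(c)(u^r), i.e.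
   when delta(x)(u) lies in c. *)
From mathcomp Require Import all_boot.
Set Implicit Arguments. Unset Strict Implicit. Unset Printing Implicit Defensive.

Section MuPL.
Variables (Sigma : finType) (X : Type) (delta : X -> Sigma -> X).
Implicit Types (U : X -> Prop) (u v w : seq Sigma).

Lemma hdeltaE U w y : hdelta delta U w y = U (deltaw delta y (rev w)).
Proof.
elim: w U => [|a w IHw] U //=.
by rewrite IHw rev_cons /deltaw foldl_rcons.
Qed.

Lemma hdelta_cat U v w :
  hdelta delta U (v ++ w) = hdelta delta (hdelta delta U v) w.
Proof. exact: foldl_cat. Qed.

Variable c : X -> Prop.

Lemma cls_eq_hdelta U v v' : genc delta c U ->
  cls delta c v = cls delta c v' -> hdelta delta U v = hdelta delta U v'.
Proof.
move=> cU Evv'; have : cls delta c v v' by rewrite Evv'.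
by move/(_ U cU).
Qed.

Lemma cls_eq_hdelta_c v v' :
  cls delta c v = cls delta c v' -> hdelta delta c v = hdelta delta c v'.
Proof. by apply: cls_eq_hdelta; exists [::]. Qed.

Definition accepting_classes (x : X) (C : seq Sigma -> Prop) : Prop :=
  exists v, C = cls delta c v /\ hdelta delta c v x.

Lemma accepting_classes_muPL_state x :
  muPL_state delta c (accepting_classes x).
Proof. by move=> C [v [-> _]]; exists v. Qed.

Lemma accepting_clsE x v :
  accepting_classes x (cls delta c v) <-> hdelta delta c v x.
Proof.
split=> [[v' [/cls_eq_hdelta_c -> //]] | xv]; by exists v.
Qed.

Lemma Lmu_accepting_classes x u :
  Lmu delta c (accepting_classes x) u <-> hdelta delta c (rev u) x.
Proof.
split=> [[w [/cls_eq_hdelta_c eps_w /accepting_clsE]] | xu].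
  by rewrite hdelta_cat -eps_w.
by exists [::]; split; last exact/accepting_clsE.
Qed.

End MuPL.

Theorem mainTheorem7 (Sigma : finType) (X : Type) (delta : X -> Sigma -> X)
  (c : X -> Prop) (x : X) :
  exists UU : (seq Sigma -> Prop) -> Prop,
    muPL_state delta c UU /\
    (forall u : seq Sigma, Lmu delta c UU u <-> Lxc delta c x u).
Proof.
exists (accepting_classes delta c x); split.
  exact: accepting_classes_muPL_state.
move=> u; apply: iff_trans (Lmu_accepting_classes delta c x u) _.
by rewrite hdeltaE revK.
Qed.
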